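(* Let $E,F$ be vector lattices with $F$ Dedekind complete, and let $S,T\in\mathcal{U}_+(E,F)$. Then $S\wedge T=0$ in $\mathcal{U}(E,F)$ if and only if for every $x\in E$ and every $\varepsilon>0$ there exist a partition of unity $(\rho_\alpha)_{\alpha\in\Delta}$ in $\mathfrak{P}(F)$ and a family $(x_\alpha)_{\alpha\in\Delta}\subset\mathcal{F}_x$ such that \[ \rho_\alpha Tx_\alpha\le\varepsilon\,Tx\quad\text{and}\quad\rho_\alpha S(x-x_\alpha)\le\varepsilon\,Sx\quad\text{for all }\alpha\in\Delta. \]
   Context: For a vector lattice $E$, an element $z$ is a fragment of $x\in E$ if $|z|\wedge|x-z|=0$; $\mathcal{F}_x$ denotes the set of fragments of $x$. An operator $T\colon E\to F$ between vector lattices is orthogonally additive if $T(x+y)=Tx+Ty$ whenever $|x|\wedge|y|=0$. $\mathcal{U}(E,F)$ is the set of orthogonally additive, order bounded (in general nonlinear) operators $E\to F$, ordered by $S\le T$ iff $Tx-Sx\ge0$ for all $x\in E$; $\mathcal{U}_+(E,F)$ is its positive cone. For Dedekind complete $F$, $\mathcal{U}(E,F)$ is a Dedekind complete vector lattice. $\mathfrak{P}(F)$ is the Boolean algebra of band projections of $F$ ($\rho'\wedge\rho''=\rho'\rho''$, $\rho^\perp=I_F-\rho$). A partition of unity in $\mathfrak{P}(F)$ is a family $(\rho_\alpha)$ of band projections with $\rho_\alpha\wedge\rho_\beta=0$ for $\alpha\ne\beta$ and $\sup_\alpha\rho_\alpha=I_F$. *)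

From Stdlib Require Import Reals.
Open Scope R_scope.

Record VectorLattice := {
  vl_car :> Type;
  vzero : vl_car;
  vadd : vl_car -> vl_car -> vl_car;
  vopp : vl_car -> vl_car;
  vscal : R -> vl_car -> vl_car;
  vle : vl_car -> vl_car -> Prop;
  vjoin : vl_car -> vl_car -> vl_car;
  vmeet : vl_car -> vl_car -> vl_car;
  vaddA : forall x y z, vadd x (vadd y z) = vadd (vadd x y) z;
  vaddC : forall x y, vadd x y = vadd y x;
  vadd0 : forall x, vadd vzero x = x;
  vaddN : forall x, vadd x (vopp x) = vzero;
  vscal1 : forall x, vscal 1 x = x;
  vscalA : forall a b x, vscal a (vscal b x) = vscal (a * b) x;
  vscalDl : forall a b x, vscal (a + b) x = vadd (vscal a x) (vscal b x);
  vscalDr : forall a x y, vscal a (vadd x y) = vadd (vscal a x) (vscal a y);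
  vle_refl : forall x, vle x x;
  vle_antisym : forall x y, vle x y -> vle y x -> x = y;
  vle_trans : forall x y z, vle x y -> vle y z -> vle x z;
  vle_add : forall x y z, vle x y -> vle (vadd x z) (vadd y z);
  vle_scal : forall a x y, 0 <= a -> vle x y -> vle (vscal a x) (vscal a y);
  vjoin_l : forall x y, vle x (vjoin x y);
  vjoin_r : forall x y, vle y (vjoin x y);
  vjoin_least : forall x y z, vle x z -> vle y z -> vle (vjoin x y) z;
  vmeet_l : forall x y, vle (vmeet x y) x;
  vmeet_r : forall x y, vle (vmeet x y) y;
  vmeet_greatest : forall x y z, vle z x -> vle z y -> vle z (vmeet x y)
}.

Arguments vzero {v}.
Arguments vadd {v} _ _.
Arguments vopp {v} _.
Arguments vscal {v} _ _.
Arguments vle {v} _ _.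
Arguments vjoin {v} _ _.
Arguments vmeet {v} _ _.

Definition vsub {E : VectorLattice} (x y : E) : E := vadd x (vopp y).
Definition vabs {E : VectorLattice} (x : E) : E := vjoin x (vopp x).

Definition disjoint {E : VectorLattice} (x y : E) : Prop :=
  vmeet (vabs x) (vabs y) = vzero.

Definition is_sup {E : VectorLattice} (A : E -> Prop) (s : E) : Prop :=
  (forall x, A x -> vle x s) /\ (forall u, (forall x, A x -> vle x u) -> vle s u).

Definition dedekind_complete (F : VectorLattice) : Prop :=
  forall A : F -> Prop, (exists x, A x) -> (exists u, forall x, A x -> vle x u) ->
    exists s, is_sup A s.

Definition fragment {E : VectorLattice} (z x : E) : Prop := disjoint z (vsub x z).

Definition is_band {F : VectorLattice} (B : F -> Prop) : Prop :=
  B vzero /\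
  (forall x y, B x -> B y -> B (vadd x y)) /\
  (forall a x, B x -> B (vscal a x)) /\
  (forall x y, B x -> vle (vabs y) (vabs x) -> B y) /\
  (forall (A : F -> Prop) s, (forall x, A x -> B x) -> is_sup A s -> B s).

Definition disj_compl {F : VectorLattice} (B : F -> Prop) (y : F) : Prop :=
  forall b, B b -> disjoint y b.

Definition band_projection {F : VectorLattice} (rho : F -> F) : Prop :=
  exists B : F -> Prop, is_band B /\
    forall x, B (rho x) /\ disj_compl B (vsub x (rho x)).

(** Order of the Boolean algebra P(F): rho <= pi iff rho /\ pi = pi rho = rho. *)
Definition bp_le {F : VectorLattice} (rho pi : F -> F) : Prop :=
  forall x, pi (rho x) = rho x.

(** Partition of unity in P(F): pairwise disjoint band projections
    (rho_a /\ rho_b = rho_a rho_b = 0 for a <> b) with supremum I_F in P(F). *)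
Definition partition_of_unity {F : VectorLattice} {D : Type} (rho : D -> F -> F) : Prop :=
  (forall a, band_projection (rho a)) /\
  (forall a b, a <> b -> forall x, rho a (rho b x) = vzero) /\
  (forall pi : F -> F, band_projection pi -> (forall a, bp_le (rho a) pi) ->
     forall x, pi x = x).

Definition orth_additive {E F : VectorLattice} (T : E -> F) : Prop :=
  forall x y : E, disjoint x y -> T (vadd x y) = vadd (T x) (T y).

Definition order_bounded_op {E F : VectorLattice} (T : E -> F) : Prop :=
  forall a b : E, exists c d : F,
    forall x, vle a x -> vle x b -> vle c (T x) /\ vle (T x) d.

Definition in_U {E F : VectorLattice} (T : E -> F) : Prop :=
  orth_additive T /\ order_bounded_op T.

Definition U_le {E F : VectorLattice} (S T : E -> F) : Prop :=
  forall x, vle vzero (vsub (T x) (S x)).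

Definition U_zero {E F : VectorLattice} : E -> F := fun _ => vzero.

Definition in_U_plus {E F : VectorLattice} (T : E -> F) : Prop :=
  in_U T /\ U_le U_zero T.

Definition U_inf_is {E F : VectorLattice} (S T M : E -> F) : Prop :=
  in_U M /\ U_le M S /\ U_le M T /\
  (forall R, in_U R -> U_le R S -> U_le R T -> U_le R M).

(** If [S /\ T = 0], the operator [x |-> inf {S (x - y) + T y | y fragment of x}] lies below
    [S] and [T] in U(E,F) and is orthogonally additive (a fragment of a disjoint sum splits into
    fragments of the summands), so it vanishes.  Hence a nonzero [0 <= h <= T x /\ S x] in a band
    [C] cannot satisfy [eps h <= S (x - y) + T y] for every fragment [y]; this yields inside [C] a
    nonzero band, disjoint from [(S (x - y) + T y - eps (T x /\ S x))^+], on which [y] satisfies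
    both estimates.  A maximal disjoint family of such bands (Zorn) gives the partition of unity.
    Conversely, if [R <= S, T] in U(E,F), then on the band of [rho_a],
    [R x = R x_a + R (x - x_a) <= T x_a + S (x - x_a) <= eps (T x + S x)], so [R x <= 0] by the
    Archimedean property. *)

From Stdlib Require Import Reals Lra Classical ClassicalEpsilon ProofIrrelevance.
From mathcomp Require classical_sets.
Open Scope R_scope.

Arguments vaddA {v} _ _ _.
Arguments vaddC {v} _ _.
Arguments vadd0 {v} _.
Arguments vaddN {v} _.
Arguments vscal1 {v} _.
Arguments vscalA {v} _ _ _.
Arguments vscalDl {v} _ _ _.
Arguments vscalDr {v} _ _ _.
Arguments vle_refl {v} _.
Arguments vle_antisym {v} _ _ _ _.
Arguments vle_trans {v} _ _ _ _ _.
Arguments vle_add {v} _ _ _ _.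
Arguments vle_scal {v} _ _ _ _ _.
Arguments vjoin_l {v} _ _.
Arguments vjoin_r {v} _ _.
Arguments vjoin_least {v} _ _ _ _ _.
Arguments vmeet_l {v} _ _.
Arguments vmeet_r {v} _ _.
Arguments vmeet_greatest {v} _ _ _ _ _.

Section Arithmetic.
Context {V : VectorLattice}.
Implicit Types x y z w u v : V.

Lemma addr0 x : vadd x vzero = x.
Proof. rewrite vaddC; apply vadd0. Qed.

Lemma addNr x : vadd (vopp x) x = vzero.
Proof. rewrite vaddC; apply vaddN. Qed.

Lemma addrK x y : vadd (vadd x y) (vopp y) = x.
Proof. rewrite <- vaddA, vaddN, addr0; reflexivity. Qed.

Lemma subrK x y : vadd (vsub x y) y = x.
Proof. unfold vsub; rewrite <- vaddA, addNr, addr0; reflexivity. Qed.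

Lemma subrKC x y : vadd y (vsub x y) = x.
Proof. rewrite vaddC; apply subrK. Qed.

Lemma addIr x y z : vadd x z = vadd y z -> x = y.
Proof. intro H. rewrite <- (addrK x z), <- (addrK y z), H; reflexivity. Qed.

Lemma opp_uniq x y : vadd x y = vzero -> y = vopp x.
Proof.
  intro H. apply (addIr _ _ x). rewrite (vaddC y), H, addNr; reflexivity.
Qed.

Lemma oppK x : vopp (vopp x) = x.
Proof. symmetry; apply opp_uniq, addNr. Qed.

Lemma opp0 : vopp (@vzero V) = vzero.
Proof. symmetry; apply opp_uniq, vadd0. Qed.

Lemma oppD x y : vopp (vadd x y) = vadd (vopp x) (vopp y).
Proof.
  symmetry; apply opp_uniq.
  rewrite (vaddC (vopp x)), vaddA, addrK, vaddN; reflexivity.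
Qed.

Lemma subrr x : vsub x x = vzero.
Proof. apply vaddN. Qed.

Lemma subr0 x : vsub x vzero = x.
Proof. unfold vsub; rewrite opp0; apply addr0. Qed.

Lemma sub0r x : vsub vzero x = vopp x.
Proof. apply vadd0. Qed.

Lemma subr0_eq x y : vsub x y = vzero -> x = y.
Proof. intro H. rewrite <- (subrK x y), H; apply vadd0. Qed.

Lemma oppB x y : vopp (vsub x y) = vsub y x.
Proof. unfold vsub; rewrite oppD, oppK; apply vaddC. Qed.

Lemma addrACA x y z w : vadd (vadd x y) (vadd z w) = vadd (vadd x z) (vadd y w).
Proof.
  rewrite <- !vaddA; f_equal. rewrite !vaddA; f_equal; apply vaddC.
Qed.

Lemma subDD x y z w : vsub (vadd x y) (vadd z w) = vadd (vsub x z) (vsub y w).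
Proof. unfold vsub; rewrite oppD; apply addrACA. Qed.

Lemma scale0r x : vscal 0 x = vzero.
Proof.
  apply (addIr _ _ (vscal 0 x)). rewrite <- vscalDl, vadd0, Rplus_0_r; reflexivity.
Qed.

Lemma scaler0 a : vscal a (@vzero V) = vzero.
Proof. rewrite <- (scale0r vzero), vscalA, Rmult_0_r; reflexivity. Qed.

Lemma scaleNr a x : vscal (- a) x = vopp (vscal a x).
Proof.
  apply opp_uniq. rewrite <- vscalDl, Rplus_opp_r; apply scale0r.
Qed.

Lemma scaleN1r x : vscal (Ropp 1) x = vopp x.
Proof. rewrite scaleNr. f_equal. apply vscal1. Qed.

Lemma scalerN a x : vscal a (vopp x) = vopp (vscal a x).
Proof.
  apply opp_uniq. rewrite <- vscalDr, vaddN; apply scaler0.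
Qed.

Lemma scalerB a x y : vscal a (vsub x y) = vsub (vscal a x) (vscal a y).
Proof. unfold vsub; rewrite vscalDr, scalerN; reflexivity. Qed.

Lemma scale2r x : vscal 2 x = vadd x x.
Proof. replace 2 with (1 + 1) by ring. rewrite vscalDl, vscal1; reflexivity. Qed.

Lemma scalerK a x : a <> 0 -> vscal (/ a) (vscal a x) = x.
Proof. intro Ha. rewrite vscalA, Rinv_l by exact Ha; apply vscal1. Qed.

Lemma lerD2l x y z : vle x y -> vle (vadd z x) (vadd z y).
Proof. rewrite !(vaddC z); apply vle_add. Qed.

Lemma lerD2r_inv x y z : vle (vadd x z) (vadd y z) -> vle x y.
Proof. intro H. rewrite <- (addrK x z), <- (addrK y z). apply vle_add, H. Qed.

Lemma lerD2l_inv x y z : vle (vadd z x) (vadd z y) -> vle x y.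
Proof. rewrite !(vaddC z); apply lerD2r_inv. Qed.

Lemma lerD x y z w : vle x y -> vle z w -> vle (vadd x z) (vadd y w).
Proof.
  intros Hxy Hzw. apply vle_trans with (vadd y z); [apply vle_add | apply lerD2l]; assumption.
Qed.

Lemma lerN2 x y : vle x y -> vle (vopp y) (vopp x).
Proof.
  intro H. apply (lerD2r_inv _ _ x). rewrite addNr.
  apply vle_trans with (vadd (vopp y) y); [apply lerD2l, H | rewrite addNr; apply vle_refl].
Qed.

Lemma lerN2_inv x y : vle (vopp y) (vopp x) -> vle x y.
Proof. intro H. rewrite <- (oppK x), <- (oppK y). apply lerN2, H. Qed.

Lemma oppr_le0 x : vle vzero x -> vle (vopp x) vzero.
Proof. intro H. rewrite <- opp0. apply lerN2, H. Qed.

Lemma subr_ge0 x y : vle vzero (vsub y x) <-> vle x y.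
Proof.
  split; intro H.
  - apply (vle_add _ _ x) in H. rewrite vadd0, subrK in H. exact H.
  - rewrite <- (subrr x). apply vle_add, H.
Qed.

Lemma subr_le0 x y : vle (vsub x y) vzero <-> vle x y.
Proof.
  split; intro H.
  - apply (vle_add _ _ y) in H. rewrite vadd0, subrK in H. exact H.
  - rewrite <- (subrr y). apply vle_add, H.
Qed.

Lemma ler_subl_addr x y z : vle (vsub x y) z <-> vle x (vadd z y).
Proof.
  split; intro H.
  - apply (vle_add _ _ y) in H. rewrite subrK in H. exact H.
  - apply (vle_add _ _ (vopp y)) in H. rewrite addrK in H. exact H.
Qed.

Lemma ler_subr_addr x y z : vle x (vsub z y) <-> vle (vadd x y) z.
Proof.
  split; intro H.
  - apply (vle_add _ _ y) in H. rewrite subrK in H. exact H.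
  - apply (vle_add _ _ (vopp y)) in H. rewrite addrK in H. exact H.
Qed.

Lemma ler_addr x y : vle vzero y -> vle x (vadd x y).
Proof. intro H. rewrite <- (addr0 x) at 1. apply lerD2l, H. Qed.

Lemma ler_addl x y : vle vzero y -> vle x (vadd y x).
Proof. intro H. rewrite vaddC. apply ler_addr, H. Qed.

Lemma addr_ge0 x y : vle vzero x -> vle vzero y -> vle vzero (vadd x y).
Proof. intros Hx Hy. rewrite <- (vadd0 vzero). apply lerD; assumption. Qed.

Lemma ler_pscale2l a x y : 0 < a -> vle (vscal a x) (vscal a y) -> vle x y.
Proof.
  intros Ha H. apply (vle_scal (/ a)) in H; [|left; apply Rinv_0_lt_compat, Ha].
  rewrite !scalerK in H by lra. exact H.
Qed.

Lemma scale_ge0 a x : 0 <= a -> vle vzero x -> vle vzero (vscal a x).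
Proof. intros Ha H. rewrite <- (scaler0 a). apply vle_scal; assumption. Qed.

Lemma ler_scale2r a b x : a <= b -> vle vzero x -> vle (vscal a x) (vscal b x).
Proof.
  intros Hab Hx. apply subr_ge0. unfold vsub.
  rewrite <- scaleNr, <- vscalDl. apply scale_ge0; [lra | exact Hx].
Qed.

Lemma joinC x y : vjoin x y = vjoin y x.
Proof.
  apply vle_antisym; apply vjoin_least; (apply vjoin_l || apply vjoin_r).
Qed.

Lemma meetC x y : vmeet x y = vmeet y x.
Proof.
  apply vle_antisym; apply vmeet_greatest; (apply vmeet_l || apply vmeet_r).
Qed.

Lemma join_idPr x y : vle x y -> vjoin x y = y.
Proof.
  intro H. apply vle_antisym; [apply vjoin_least; [exact H | apply vle_refl] | apply vjoin_r].
Qed.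

Lemma meet_idPl x y : vle x y -> vmeet x y = x.
Proof.
  intro H. apply vle_antisym; [apply vmeet_l | apply vmeet_greatest; [apply vle_refl | exact H]].
Qed.

Lemma leJ x y x' y' : vle x x' -> vle y y' -> vle (vjoin x y) (vjoin x' y').
Proof.
  intros Hx Hy. apply vjoin_least.
  - apply vle_trans with x'; [exact Hx | apply vjoin_l].
  - apply vle_trans with y'; [exact Hy | apply vjoin_r].
Qed.

Lemma leI x y x' y' : vle x x' -> vle y y' -> vle (vmeet x y) (vmeet x' y').
Proof.
  intros Hx Hy. apply vmeet_greatest.
  - apply vle_trans with x; [apply vmeet_l | exact Hx].
  - apply vle_trans with y; [apply vmeet_r | exact Hy].
Qed.

Lemma meet_ge0 x y : vle vzero x -> vle vzero y -> vle vzero (vmeet x y).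
Proof. apply vmeet_greatest. Qed.

Lemma addIl x y z : vadd z (vmeet x y) = vmeet (vadd z x) (vadd z y).
Proof.
  apply vle_antisym.
  - apply vmeet_greatest; apply lerD2l; (apply vmeet_l || apply vmeet_r).
  - apply (lerD2l_inv _ _ (vopp z)). rewrite vaddA, addNr, vadd0.
    apply vmeet_greatest; apply (lerD2l_inv _ _ z); rewrite vaddA, vaddN, vadd0;
      (apply vmeet_l || apply vmeet_r).
Qed.

Lemma addJl x y z : vadd z (vjoin x y) = vjoin (vadd z x) (vadd z y).
Proof.
  apply vle_antisym.
  - apply (lerD2l_inv _ _ (vopp z)). rewrite vaddA, addNr, vadd0.
    apply vjoin_least; apply (lerD2l_inv _ _ z); rewrite vaddA, vaddN, vadd0;
      (apply vjoin_l || apply vjoin_r).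
  - apply vjoin_least; apply lerD2l; (apply vjoin_l || apply vjoin_r).
Qed.

Lemma oppJ x y : vopp (vjoin x y) = vmeet (vopp x) (vopp y).
Proof.
  apply vle_antisym.
  - apply vmeet_greatest; apply lerN2; (apply vjoin_l || apply vjoin_r).
  - apply lerN2_inv. rewrite oppK. apply vjoin_least.
    + rewrite <- (oppK x) at 1. apply lerN2, vmeet_l.
    + rewrite <- (oppK y) at 1. apply lerN2, vmeet_r.
Qed.

Lemma oppI x y : vopp (vmeet x y) = vjoin (vopp x) (vopp y).
Proof. rewrite <- (oppK x), <- (oppK y) at 1. rewrite <- oppJ; apply oppK. Qed.

Lemma addJI x y : vadd (vjoin x y) (vmeet x y) = vadd x y.
Proof.
  rewrite <- (subrKC (vadd x y) (vjoin x y)). f_equal.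
  unfold vsub. rewrite oppJ, addIl, addrK, (vaddC x y), addrK. apply meetC.
Qed.

Lemma meetD_le u v w : vle vzero u -> vle vzero v -> vle vzero w ->
  vle (vmeet u (vadd v w)) (vadd (vmeet u v) (vmeet u w)).
Proof.
  intros Hu Hv Hw. set (t := vmeet u (vadd v w)).
  assert (H : vle (vsub t (vmeet u v)) (vmeet u w)).
  { unfold vsub. rewrite oppI, addJl. apply vjoin_least.
    - apply vle_trans with vzero; [apply subr_le0, vmeet_l | apply meet_ge0; assumption].
    - apply vmeet_greatest.
      + apply vle_trans with t; [apply (ler_subl_addr t); apply ler_addr, Hv | apply vmeet_l].
      + apply (ler_subl_addr t). rewrite vaddC. apply vmeet_r. }
  rewrite vaddC. apply (ler_subl_addr t), H.
Qed.
End Arithmetic.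

Section PosNegAbs.
Context {V : VectorLattice}.
Implicit Types x y z w u v : V.

Definition vpos x := vjoin x vzero.
Definition vneg x := vjoin (vopp x) vzero.

Lemma vpos_ge0 x : vle vzero (vpos x). Proof. apply vjoin_r. Qed.
Lemma vneg_ge0 x : vle vzero (vneg x). Proof. apply vjoin_r. Qed.
Lemma le_vpos x : vle x (vpos x). Proof. apply vjoin_l. Qed.

Lemma vpos_le x y : vle x y -> vle vzero y -> vle (vpos x) y.
Proof. apply vjoin_least. Qed.

Lemma vpos_mono x y : vle x y -> vle (vpos x) (vpos y).
Proof. intro H. apply leJ; [exact H | apply vle_refl]. Qed.

Lemma vneg_anti x y : vle x y -> vle (vneg y) (vneg x).
Proof. intro H. apply leJ; [apply lerN2, H | apply vle_refl]. Qed.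

Lemma vpos_le0 x : vle x vzero -> vpos x = vzero.
Proof. apply join_idPr. Qed.

Lemma vposD_le x y : vle (vpos (vadd x y)) (vadd (vpos x) (vpos y)).
Proof. apply vpos_le; [apply lerD; apply le_vpos | apply addr_ge0; apply vpos_ge0]. Qed.

Lemma vpos_sub_vneg x : vsub (vpos x) (vneg x) = x.
Proof.
  unfold vsub, vneg. rewrite oppJ, oppK, opp0. unfold vpos. rewrite addJI. apply addr0.
Qed.

Lemma meet_vpos_vneg x : vmeet (vpos x) (vneg x) = vzero.
Proof.
  assert (Hp : vpos x = vadd (vneg x) x) by (rewrite <- (vpos_sub_vneg x) at 3; symmetry; apply subrKC).
  rewrite Hp. rewrite <- (addr0 (vneg x)) at 2. rewrite <- addIl.
  unfold vneg. rewrite vaddC, <- (oppK (vmeet x vzero)), oppI, opp0. apply addNr.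
Qed.

Lemma le_abs x : vle x (vabs x). Proof. apply vjoin_l. Qed.
Lemma le_abs_opp x : vle (vopp x) (vabs x). Proof. apply vjoin_r. Qed.

Lemma abs_le x w : vle x w -> vle (vopp x) w -> vle (vabs x) w.
Proof. apply vjoin_least. Qed.

Lemma abs_ge0 x : vle vzero (vabs x).
Proof.
  apply (ler_pscale2l 2); [lra|]. rewrite scaler0, scale2r, <- (vaddN x).
  apply lerD; [apply le_abs | apply le_abs_opp].
Qed.

Lemma abs_id x : vle vzero x -> vabs x = x.
Proof.
  intro H. unfold vabs. rewrite joinC. apply join_idPr.
  apply vle_trans with vzero; [apply oppr_le0, H | exact H].
Qed.

Lemma abs_abs x : vabs (vabs x) = vabs x. Proof. apply abs_id, abs_ge0. Qed.

Lemma abs_opp x : vabs (vopp x) = vabs x.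
Proof. unfold vabs. rewrite oppK. apply joinC. Qed.

Lemma abs0 : vabs (@vzero V) = vzero. Proof. apply abs_id, vle_refl. Qed.

Lemma vpos_le_abs x : vle (vpos x) (vabs x).
Proof. apply vpos_le; [apply le_abs | apply abs_ge0]. Qed.

Lemma vneg_le_abs x : vle (vneg x) (vabs x).
Proof. apply vjoin_least; [apply le_abs_opp | apply abs_ge0]. Qed.

Lemma absD_le x y : vle (vabs (vadd x y)) (vadd (vabs x) (vabs y)).
Proof.
  apply abs_le; [apply lerD; apply le_abs|].
  rewrite oppD. apply lerD; apply le_abs_opp.
Qed.

Lemma absB_le x y : vle (vabs (vsub x y)) (vadd (vabs x) (vabs y)).
Proof. unfold vsub. rewrite <- (abs_opp y). apply absD_le. Qed.

Lemma abs_eq0 x : vabs x = vzero -> x = vzero.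
Proof.
  intro H. apply vle_antisym.
  - rewrite <- H. apply le_abs.
  - apply lerN2_inv. rewrite opp0, <- H. apply le_abs_opp.
Qed.

Lemma abs_scale_le a x : vle (vabs (vscal a x)) (vscal (Rabs a) (vabs x)).
Proof.
  destruct (Rle_or_lt 0 a) as [Ha|Ha].
  - rewrite Rabs_right by lra. apply abs_le.
    + apply vle_scal; [exact Ha | apply le_abs].
    + rewrite <- scalerN. apply vle_scal; [exact Ha | apply le_abs_opp].
  - rewrite Rabs_left by lra. apply abs_le.
    + rewrite <- (oppK x) at 1. rewrite scalerN, <- scaleNr.
      apply vle_scal; [lra | apply le_abs_opp].
    + rewrite <- scaleNr. apply vle_scal; [lra | apply le_abs].
Qed.

End PosNegAbs.

(** * Disjointness and fragments *)

Section Disjointness.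
Context {V : VectorLattice}.
Implicit Types x y z w u v : V.

Lemma disj_sym x y : disjoint x y -> disjoint y x.
Proof. unfold disjoint. rewrite meetC. trivial. Qed.

Lemma disj_ge0 u v : vle vzero u -> vle vzero v -> disjoint u v <-> vmeet u v = vzero.
Proof. intros Hu Hv. unfold disjoint. rewrite !abs_id by assumption. tauto. Qed.

Lemma disj_le x y z : vle (vabs x) (vabs y) -> disjoint y z -> disjoint x z.
Proof.
  unfold disjoint. intros Hxy Hyz. apply vle_antisym.
  - rewrite <- Hyz. apply leI; [exact Hxy | apply vle_refl].
  - apply meet_ge0; apply abs_ge0.
Qed.

Lemma disj_le2 x y z w : vle (vabs x) (vabs y) -> vle (vabs z) (vabs w) ->
  disjoint y w -> disjoint x z.
Proof.
  intros Hxy Hzw Hyw. apply (disj_le x y); [exact Hxy|].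
  apply disj_sym, (disj_le z w); [exact Hzw | apply disj_sym, Hyw].
Qed.

Lemma disj_abs x z : disjoint x z -> disjoint (vabs x) z.
Proof. apply disj_le. rewrite abs_abs. apply vle_refl. Qed.

Lemma disj0 z : disjoint vzero z.
Proof.
  unfold disjoint. rewrite abs0. apply vle_antisym; [apply vmeet_l|].
  apply meet_ge0; [apply vle_refl | apply abs_ge0].
Qed.

Lemma disj_self x : disjoint x x -> x = vzero.
Proof.
  unfold disjoint. rewrite meet_idPl by apply vle_refl. apply abs_eq0.
Qed.

Lemma disjD x y z : disjoint x z -> disjoint y z -> disjoint (vadd x y) z.
Proof.
  unfold disjoint. intros Hx Hy. apply vle_antisym; [|apply meet_ge0; apply abs_ge0].
  apply vle_trans with (vmeet (vabs z) (vadd (vabs x) (vabs y))).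
  - rewrite meetC. apply leI; [apply vle_refl | apply absD_le].
  - rewrite <- (vadd0 vzero), <- Hx at 1. rewrite <- Hy, !(meetC _ (vabs z)).
    apply meetD_le; apply abs_ge0.
Qed.

Lemma disj_le_sum x y1 y2 z : vle (vabs x) (vadd (vabs y1) (vabs y2)) ->
  disjoint y1 z -> disjoint y2 z -> disjoint x z.
Proof.
  intros H H1 H2. apply (disj_le x (vadd (vabs y1) (vabs y2))).
  - rewrite (abs_id (vadd _ _)); [exact H | apply addr_ge0; apply abs_ge0].
  - apply disjD; apply disj_abs; assumption.
Qed.

Lemma disjB x y z : disjoint x z -> disjoint y z -> disjoint (vsub x y) z.
Proof. intros Hx Hy. apply (disj_le_sum _ x y); [apply absB_le | exact Hx | exact Hy]. Qed.

Lemma disj_scale a x z : disjoint x z -> disjoint (vscal a x) z.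
Proof.
  intro H.
  assert (Hn : forall n, disjoint (vscal (INR n) (vabs x)) z).
  { induction n as [|n IH].
    - simpl. rewrite scale0r. apply disj0.
    - rewrite S_INR, vscalDl, vscal1. apply disjD; [exact IH | apply disj_abs, H]. }
  destruct (INR_unbounded (Rabs a)) as [n Hlt].
  apply (disj_le _ (vscal (INR n) (vabs x))); [|apply Hn].
  rewrite (abs_id (vscal (INR n) _)) by (apply scale_ge0; [apply pos_INR | apply abs_ge0]).
  apply vle_trans with (vscal (Rabs a) (vabs x)); [apply abs_scale_le|].
  apply ler_scale2r; [lra | apply abs_ge0].
Qed.

Lemma disj_abs_le_add x y : disjoint x y -> vle (vabs x) (vabs (vadd x y)).
Proof.
  intro H.
  assert (Hx : vle (vabs x) (vadd (vabs (vadd x y)) (vabs y))).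
  { rewrite <- (addrK x y) at 1. apply absB_le. }
  rewrite <- (meet_idPl _ _ Hx).
  apply vle_trans with (vadd (vmeet (vabs x) (vabs (vadd x y))) (vmeet (vabs x) (vabs y))).
  - apply meetD_le; apply abs_ge0.
  - rewrite H, addr0. apply vmeet_r.
Qed.

Lemma disj_vpos_vneg x : disjoint (vpos x) (vneg x).
Proof. apply disj_ge0; [apply vpos_ge0 | apply vneg_ge0 | apply meet_vpos_vneg]. Qed.

End Disjointness.

Section Fragments.
Context {V : VectorLattice}.
Implicit Types x y z w u v p a b : V.

Lemma frag0 z : fragment vzero z.
Proof. apply disj0. Qed.

Lemma frag_refl z : fragment z z.
Proof. unfold fragment. rewrite subrr. apply disj_sym, disj0. Qed.

Lemma frag_abs_le y z : fragment y z -> vle (vabs y) (vabs z).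
Proof. intro H. rewrite <- (subrKC z y). apply disj_abs_le_add, H. Qed.

Lemma frag_compl_abs_le y z : fragment y z -> vle (vabs (vsub z y)) (vabs z).
Proof.
  intro H. rewrite <- (subrK z y) at 2. apply disj_abs_le_add, disj_sym, H.
Qed.

Lemma fragD z1 z2 y1 y2 : disjoint z1 z2 -> fragment y1 z1 -> fragment y2 z2 ->
  fragment (vadd y1 y2) (vadd z1 z2) /\ disjoint y1 y2 /\
  disjoint (vsub z1 y1) (vsub z2 y2).
Proof.
  intros H F1 F2.
  pose proof (frag_abs_le _ _ F1) as A1. pose proof (frag_compl_abs_le _ _ F1) as C1.
  pose proof (frag_abs_le _ _ F2) as A2. pose proof (frag_compl_abs_le _ _ F2) as C2.
  split.
  - unfold fragment. rewrite subDD. apply disjD; apply disj_sym, disjD; apply disj_sym.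
    + exact F1.
    + apply (disj_le2 _ z1 _ z2); assumption.
    + apply (disj_le2 _ z2 _ z1); try apply disj_sym; assumption.
    + exact F2.
  - split; apply (disj_le2 _ z1 _ z2); assumption.
Qed.

Lemma meet_split_disj p a b : vle vzero p -> vle vzero a -> vle vzero b ->
  vmeet a b = vzero -> vle p (vadd a b) -> p = vadd (vmeet p a) (vmeet p b).
Proof.
  intros Hp Ha Hb Hab Hle. apply vle_antisym.
  - rewrite <- (meet_idPl _ _ Hle) at 1. apply meetD_le; assumption.
  - apply vle_trans with (vadd p vzero); [|rewrite addr0; apply vle_refl].
    rewrite <- addJI. apply lerD.
    + apply vjoin_least; apply vmeet_l.
    + rewrite <- Hab. apply leI; apply vmeet_r.
Qed.

(** [y_i := y^+ /\ |c_i| - y^- /\ |c_i|] for [c_1 = a], [c_2 = b]. *)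
Lemma split_along_disj y a b : disjoint a b -> vle (vabs y) (vadd (vabs a) (vabs b)) ->
  exists y1 y2, y = vadd y1 y2 /\
    vle (vabs y1) (vadd (vabs a) (vabs a)) /\ vle (vabs y2) (vadd (vabs b) (vabs b)).
Proof.
  intros Hab Hy.
  assert (Hsplit : forall p, vle vzero p -> vle p (vabs y) ->
            p = vadd (vmeet p (vabs a)) (vmeet p (vabs b))).
  { intros p Hp Hpy. apply meet_split_disj; try apply abs_ge0; try assumption.
    apply vle_trans with (vabs y); assumption. }
  assert (Hpart : forall c, vle (vabs (vsub (vmeet (vpos y) (vabs c)) (vmeet (vneg y) (vabs c))))
                               (vadd (vabs c) (vabs c))).
  { intro c. apply vle_trans with (vadd (vabs (vmeet (vpos y) (vabs c))) (vabs (vmeet (vneg y) (vabs c)))).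
    - apply absB_le.
    - rewrite (abs_id (vmeet (vpos y) _)), (abs_id (vmeet (vneg y) _))
        by (apply meet_ge0; (apply vpos_ge0 || apply vneg_ge0 || apply abs_ge0)).
      apply lerD; apply vmeet_r. }
  exists (vsub (vmeet (vpos y) (vabs a)) (vmeet (vneg y) (vabs a))),
         (vsub (vmeet (vpos y) (vabs b)) (vmeet (vneg y) (vabs b))).
  split; [|split; apply Hpart].
  rewrite <- subDD, <- !Hsplit; [symmetry; apply vpos_sub_vneg | | | |].
  - apply vneg_ge0.
  - apply vneg_le_abs.
  - apply vpos_ge0.
  - apply vpos_le_abs.
Qed.

Lemma frag_split z1 z2 y : disjoint z1 z2 -> fragment y (vadd z1 z2) ->
  exists y1 y2, fragment y1 z1 /\ fragment y2 z2 /\ y = vadd y1 y2.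
Proof.
  intros H F.
  assert (Hy : vle (vabs y) (vadd (vabs z1) (vabs z2))).
  { apply vle_trans with (vabs (vadd z1 z2)); [apply frag_abs_le, F | apply absD_le]. }
  destruct (split_along_disj y z1 z2 H Hy) as (y1 & y2 & -> & B1 & B2).
  assert (D1 : disjoint y1 z2) by (apply (disj_le_sum _ z1 z1); assumption).
  assert (D2 : disjoint y2 z1) by (apply (disj_le_sum _ z2 z2); try apply disj_sym; assumption).
  assert (D12 : disjoint y1 y2) by (apply disj_sym, (disj_le_sum _ z2 z2); [exact B2 | |]; apply disj_sym, D1).
  set (c1 := vsub z1 y1). set (c2 := vsub z2 y2).
  assert (E1 : disjoint c1 z2) by (apply (disj_le_sum _ z1 y1); [apply absB_le | exact H | exact D1]).
  assert (E2 : disjoint c1 y2) by (apply (disj_le_sum _ z1 y1); [apply absB_le | apply disj_sym, D2 | exact D12]).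
  assert (E12 : disjoint c1 c2)
    by (apply disj_sym, (disj_le_sum _ z2 y2); [apply absB_le | | ]; apply disj_sym; assumption).
  assert (F' : disjoint (vadd y1 y2) (vadd c1 c2)).
  { unfold fragment in F. rewrite subDD in F. exact F. }
  exists y1, y2. split; [|split; [|reflexivity]].
  - apply (disj_le2 _ (vadd y1 y2) _ (vadd c1 c2)); [| |exact F'];
      apply disj_abs_le_add; assumption.
  - apply (disj_le2 _ (vadd y1 y2) _ (vadd c1 c2)); [| |exact F'];
      rewrite vaddC; apply disj_abs_le_add, disj_sym; assumption.
Qed.

End Fragments.

(** * Bands and band projections *)

Section Bands.
Context {V : VectorLattice}.
Implicit Types x y z w u v b c k s : V.
Implicit Types A B C : V -> Prop.

Lemma band0 B : is_band B -> B vzero.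
Proof. intros [H _]; exact H. Qed.

Lemma bandD B x y : is_band B -> B x -> B y -> B (vadd x y).
Proof. intros (_ & H & _); apply H. Qed.

Lemma band_scale B a x : is_band B -> B x -> B (vscal a x).
Proof. intros (_ & _ & H & _); apply H. Qed.

Lemma band_ideal B x y : is_band B -> B x -> vle (vabs y) (vabs x) -> B y.
Proof. intros (_ & _ & _ & H & _); apply H. Qed.

Lemma bandB B x y : is_band B -> B x -> B y -> B (vsub x y).
Proof.
  intros HB Hx Hy. unfold vsub. apply bandD; [exact HB | exact Hx |].
  apply (band_ideal B y); [exact HB | exact Hy | rewrite abs_opp; apply vle_refl].
Qed.

Lemma band_abs B x : is_band B -> B x -> B (vabs x).
Proof. intros HB Hx. apply (band_ideal B x); [exact HB | exact Hx | rewrite abs_abs; apply vle_refl]. Qed.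

Lemma band_le B x y : is_band B -> B x -> vle vzero y -> vle y (vabs x) -> B y.
Proof. intros HB Hx Hy Hle. apply (band_ideal B x); [exact HB | exact Hx | rewrite abs_id; assumption]. Qed.

Lemma band_inter B C : is_band B -> is_band C -> is_band (fun k => B k /\ C k).
Proof.
  intros (B0 & BD & BZ & BI & BS) (C0 & CD & CZ & CI & CS).
  split; [|split; [|split; [|split]]].
  - split; assumption.
  - intros x y [] []; split; auto.
  - intros a x []; split; auto.
  - intros x y [] Hle; split; eauto.
  - intros A s HA Hs; split; [eapply BS | eapply CS]; try exact Hs; intros x Hx; apply HA, Hx.
Qed.

Lemma meet_le0_of_addr_le_join u v : vle (vadd u v) (vjoin u v) -> vle (vmeet u v) vzero.
Proof.
  intro H. rewrite <- addJI in H. apply (lerD2l_inv _ _ (vjoin u v)). rewrite addr0. exact H.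
Qed.

(** With [m = |z|], every [a] in [A] lies below [(s^+ \/ m) - m], hence so does [s]. *)
Lemma sup_vpos_disj A s z : is_sup A s -> (forall a, A a -> disjoint a z) ->
  disjoint (vpos s) z.
Proof.
  intros [Hub Hleast] HA. set (m := vabs z).
  set (q := vsub (vjoin (vpos s) m) m).
  assert (Hq : forall a, A a -> vle a q).
  { intros a Ha.
    assert (Ham : vmeet (vpos a) m = vzero).
    { apply disj_ge0; [apply vpos_ge0 | apply abs_ge0 |].
      apply (disj_le _ a); [rewrite abs_id by apply vpos_ge0; apply vpos_le_abs |].
      apply disj_sym, disj_abs, disj_sym, HA, Ha. }
    apply vle_trans with (vpos a); [apply le_vpos|].
    apply ler_subr_addr. rewrite <- addJI, Ham, addr0.
    apply leJ; [apply vpos_mono, Hub, Ha | apply vle_refl]. }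
  assert (Hsq : vle (vpos s) q).
  { apply vpos_le; [apply Hleast, Hq | apply subr_ge0, vjoin_r]. }
  unfold disjoint. rewrite abs_id by apply vpos_ge0. fold m. apply vle_antisym.
  - apply meet_le0_of_addr_le_join, ler_subr_addr, Hsq.
  - apply meet_ge0; [apply vpos_ge0 | apply abs_ge0].
Qed.

Lemma sup_disj A s z : is_sup A s -> (forall a, A a -> disjoint a z) -> disjoint s z.
Proof.
  intros Hs HA. destruct (classic (exists a, A a)) as [[a0 Ha0] | Hempty].
  - rewrite <- (vpos_sub_vneg s). apply disjB; [apply (sup_vpos_disj A); assumption |].
    apply (disj_le _ a0); [| apply HA, Ha0].
    rewrite abs_id by apply vneg_ge0.
    apply vle_trans with (vneg a0); [apply vneg_anti, (proj1 Hs), Ha0 | apply vneg_le_abs].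
  - assert (Hz : vle (vabs z) vzero).
    { assert (H : vle s (vsub s (vabs z))).
      { apply (proj2 Hs). intros a Ha. exfalso. apply Hempty. exists a. exact Ha. }
      apply ler_subr_addr in H. apply (lerD2l_inv _ _ s). rewrite addr0. exact H. }
    assert (Hz0 : z = vzero) by (apply abs_eq0, vle_antisym; [exact Hz | apply abs_ge0]).
    rewrite Hz0. apply disj_sym, disj0.
Qed.

Lemma disj_compl_band A : is_band (disj_compl A).
Proof.
  split; [|split; [|split; [|split]]].
  - intros b _. apply disj0.
  - intros x y Hx Hy b Hb. apply disjD; [apply Hx | apply Hy]; exact Hb.
  - intros a x Hx b Hb. apply disj_scale, Hx, Hb.
  - intros x y Hx Hle b Hb. apply (disj_le y x); [exact Hle | apply Hx, Hb].
  - intros C s HC Hs b Hb. apply (sup_disj C s b Hs). intros a Ha. apply HC; assumption.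
Qed.

Lemma ge0_of_addr_disj b c : vle vzero (vadd b c) ->
  (forall k, vle (vabs k) (vabs b) -> disjoint k c) -> vle vzero b.
Proof.
  intros H Hd.
  assert (Hneg : vle (vneg b) (vabs c)).
  { apply vle_trans with (vpos c); [|apply vpos_le_abs].
    apply leJ; [|apply vle_refl]. apply (lerD2l_inv _ _ b). rewrite vaddN. exact H. }
  assert (Hdisj : disjoint (vneg b) c).
  { apply Hd. rewrite abs_id by apply vneg_ge0. apply vneg_le_abs. }
  unfold disjoint in Hdisj. rewrite abs_id, meet_idPl in Hdisj by (apply vneg_ge0 || exact Hneg).
  rewrite <- (vpos_sub_vneg b), Hdisj, subr0. apply vpos_ge0.
Qed.
End Bands.

Definition proj_onto {V : VectorLattice} (B : V -> Prop) (rho : V -> V) : Prop :=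
  forall x, B (rho x) /\ disj_compl B (vsub x (rho x)).

Section BandProjection.
Context {V : VectorLattice} {B : V -> Prop} (HB : is_band B) {rho : V -> V}
  (Hrho : proj_onto B rho).
Implicit Types x y b c : V.

Lemma bp_uniq x b : B b -> disj_compl B (vsub x b) -> rho x = b.
Proof.
  intros Hb Hc. destruct (Hrho x) as [Hr Hrc]. apply subr0_eq, disj_self.
  assert (E : vsub (rho x) b = vsub (vsub x b) (vsub x (rho x))).
  { unfold vsub. rewrite oppD, oppK, addrACA, vaddN, vadd0. apply vaddC. }
  assert (Hd : disj_compl B (vsub (rho x) b)).
  { rewrite E. apply bandB; [apply disj_compl_band | exact Hc | exact Hrc]. }
  apply Hd, bandB; assumption.
Qed.

Lemma bp_id b : B b -> rho b = b.
Proof.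
  intro Hb. apply bp_uniq; [exact Hb|]. rewrite subrr. apply band0, disj_compl_band.
Qed.

Lemma bp_compl c : disj_compl B c -> rho c = vzero.
Proof. intro Hc. apply bp_uniq; [apply band0, HB | rewrite subr0; exact Hc]. Qed.

Lemma bp0 : rho vzero = vzero.
Proof. apply bp_id, band0, HB. Qed.

Lemma bpD x y : rho (vadd x y) = vadd (rho x) (rho y).
Proof.
  destruct (Hrho x) as [Hx Hxc], (Hrho y) as [Hy Hyc].
  apply bp_uniq; [apply bandD; assumption|].
  rewrite subDD. apply bandD; [apply disj_compl_band | exact Hxc | exact Hyc].
Qed.

Lemma bpZ a x : rho (vscal a x) = vscal a (rho x).
Proof.
  destruct (Hrho x) as [Hx Hxc].
  apply bp_uniq; [apply band_scale; assumption|].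
  rewrite <- scalerB. apply band_scale; [apply disj_compl_band | exact Hxc].
Qed.

Lemma bpB x y : rho (vsub x y) = vsub (rho x) (rho y).
Proof. unfold vsub. rewrite bpD, <- !scaleN1r, bpZ. reflexivity. Qed.

Lemma bp_ge0 x : vle vzero x -> vle vzero (rho x).
Proof.
  intro H. destruct (Hrho x) as [Hx Hxc].
  apply (ge0_of_addr_disj _ (vsub x (rho x))); [rewrite subrKC; exact H|].
  intros k Hk. apply disj_sym, Hxc, (band_ideal B (rho x)); assumption.
Qed.

Lemma bp_le x : vle vzero x -> vle (rho x) x.
Proof.
  intro H. destruct (Hrho x) as [Hx Hxc]. apply subr_ge0.
  apply (ge0_of_addr_disj _ (rho x)); [rewrite vaddC, subrKC; exact H|].
  intros k Hk. apply (band_ideal (disj_compl B) (vsub x (rho x)) k);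
    [apply disj_compl_band | exact Hxc | exact Hk | exact Hx].
Qed.

Lemma bp_mono x y : vle x y -> vle (rho x) (rho y).
Proof. intro H. apply subr_ge0. rewrite <- bpB. apply bp_ge0, subr_ge0, H. Qed.

Lemma bp_le0_of_vpos x : rho (vpos x) = vzero -> vle (rho x) vzero.
Proof.
  intro H. rewrite <- (vpos_sub_vneg x), bpB, H, sub0r. apply oppr_le0, bp_ge0, vneg_ge0.
Qed.

End BandProjection.

Definition is_inf {V : VectorLattice} (A : V -> Prop) (s : V) : Prop :=
  (forall x, A x -> vle s x) /\ (forall l, (forall x, A x -> vle l x) -> vle l s).

Section DedekindComplete.
Context {F : VectorLattice} (HF : dedekind_complete F).
Implicit Types x y z w u v b c f : F.
Implicit Types A B : F -> Prop.

Lemma inf_exists A : (exists a, A a) -> (exists l, forall a, A a -> vle l a) ->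
  exists s, is_inf A s.
Proof.
  intros [a Ha] [l Hl].
  destruct (HF (fun f => A (vopp f))) as [s [Hub Hleast]].
  - exists (vopp a). rewrite oppK. exact Ha.
  - exists (vopp l). intros x Hx. rewrite <- (oppK x). apply lerN2, Hl, Hx.
  - exists (vopp s). split.
    + intros x Hx. rewrite <- (oppK x). apply lerN2, Hub. rewrite oppK. exact Hx.
    + intros l' Hl'. rewrite <- (oppK l'). apply lerN2, Hleast.
      intros x Hx. rewrite <- (oppK x). apply lerN2, Hl', Hx.
Qed.

(** [s := sup {t z^+ | t > 0}] satisfies [s <= s / 2]. *)
Lemma archimedean w z : vle vzero w ->
  (forall eps, 0 < eps -> vle z (vscal eps w)) -> vle z vzero.
Proof.
  intros Hw H.
  destruct (HF (fun f => exists t, 0 < t /\ f = vscal t (vpos z))) as [s [Hub Hleast]].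
  - exists (vscal 1 (vpos z)), 1. split; [lra | reflexivity].
  - exists w. intros f [t [Ht ->]]. apply (ler_pscale2l (/ t)); [apply Rinv_0_lt_compat, Ht|].
    rewrite scalerK by lra. apply vpos_le; [apply H, Rinv_0_lt_compat, Ht|].
    apply scale_ge0; [left; apply Rinv_0_lt_compat, Ht | exact Hw].
  - assert (Hhalf : vle s (vscal (/ 2) s)).
    { apply Hleast. intros f [t [Ht ->]]. apply (ler_pscale2l 2); [lra|].
      rewrite !vscalA, Rinv_r, vscal1 by lra. apply Hub. exists (2 * t). split; [lra | reflexivity]. }
    assert (Hs : vle s vzero).
    { apply (vle_scal 2) in Hhalf; [|lra]. rewrite (vscalA 2), Rinv_r, vscal1, scale2r in Hhalf by lra.
      apply (lerD2l_inv _ _ s). rewrite addr0. exact Hhalf. }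
    apply vle_trans with (vpos z); [apply le_vpos|].
    apply vle_trans with s; [|exact Hs]. apply Hub. exists 1. split; [lra | symmetry; apply vscal1].
Qed.

Lemma band_sup B A s : is_band B -> (forall a, A a -> B a) -> is_sup A s -> B s.
Proof. intros (_ & _ & _ & _ & H). apply H. Qed.

Lemma proj_exists_ge0 B f : is_band B -> vle vzero f ->
  exists b, B b /\ disj_compl B (vsub f b).
Proof.
  intros HB Hf. set (P := fun y => B y /\ vle vzero y /\ vle y f).
  destruct (HF P) as [b [Hub Hleast]].
  - exists vzero. split; [apply band0, HB | split; [apply vle_refl | exact Hf]].
  - exists f. intros y (_ & _ & Hy). exact Hy.
  - assert (Hb : B b) by (apply (band_sup B P); [exact HB | intros y []; assumption | split; assumption]).
    assert (Hb0 : vle vzero b) by (apply Hub; split; [apply band0, HB | split; [apply vle_refl | exact Hf]]).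
    assert (Hbf : vle b f) by (apply Hleast; intros y (_ & _ & Hy); exact Hy).
    exists b. split; [exact Hb|]. intros c Hc.
    set (t := vmeet (vsub f b) (vabs c)).
    assert (Ht0 : vle vzero t) by (apply meet_ge0; [apply subr_ge0, Hbf | apply abs_ge0]).
    assert (Hbt : vle (vadd b t) b).
    { apply Hub. split; [|split].
      - apply bandD; [exact HB | exact Hb |]. apply (band_le B c); [exact HB | exact Hc | exact Ht0 | apply vmeet_r].
      - apply addr_ge0; assumption.
      - rewrite <- (subrKC f b). apply lerD2l, vmeet_l. }
    assert (Ht : t = vzero).
    { apply vle_antisym; [|exact Ht0]. apply (lerD2l_inv _ _ b). rewrite addr0. exact Hbt. }
    unfold disjoint. rewrite abs_id by (apply subr_ge0, Hbf). exact Ht.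
Qed.

Lemma proj_exists B f : is_band B -> exists b, B b /\ disj_compl B (vsub f b).
Proof.
  intro HB.
  destruct (proj_exists_ge0 B (vpos f) HB (vpos_ge0 f)) as [b1 [H1 H1c]].
  destruct (proj_exists_ge0 B (vneg f) HB (vneg_ge0 f)) as [b2 [H2 H2c]].
  exists (vsub b1 b2). split; [apply bandB; assumption|].
  rewrite <- (vpos_sub_vneg f) at 1.
  replace (vsub (vsub (vpos f) (vneg f)) (vsub b1 b2))
    with (vsub (vsub (vpos f) b1) (vsub (vneg f) b2)) by (unfold vsub; rewrite !oppD, !oppK; apply addrACA).
  apply bandB; [apply disj_compl_band | exact H1c | exact H2c].
Qed.

End DedekindComplete.

Definition bproj {F : VectorLattice} (B : F -> Prop) (f : F) : F :=
  epsilon (inhabits vzero) (fun b => B b /\ disj_compl B (vsub f b)).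

Lemma bproj_spec {F : VectorLattice} (HF : dedekind_complete F) (B : F -> Prop) :
  is_band B -> proj_onto B (bproj B).
Proof. intros HB f. unfold bproj. apply epsilon_spec, proj_exists; assumption. Qed.

Lemma bproj0 {F : VectorLattice} (HF : dedekind_complete F) (B : F -> Prop) :
  is_band B -> bproj B vzero = vzero.
Proof. intro HB. apply (bp0 HB (bproj_spec HF B HB)). Qed.

(** * Disjoint families of bands and partitions of unity *)

Lemma zorn_sets (T : Type) (P : (T -> Prop) -> Prop) :
  (forall C : (T -> Prop) -> Prop, (forall X, C X -> P X) ->
     (forall X Y, C X -> C Y -> (forall t, X t -> Y t) \/ (forall t, Y t -> X t)) ->
     P (fun t => exists2 X, C X & X t)) ->
  exists A, P A /\ forall B, (forall t, A t -> B t) -> P B -> forall t, B t -> A t.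
Proof.
  intro Hchain.
  destruct (@classical_sets.Zorn_bigcup _ P) as [A [PA Amax]].
  - intros C CP Ctot. apply Hchain; [exact CP|].
    intros X Y CX CY. destruct (Ctot X Y CX CY) as [h|h]; [left|right]; exact h.
  - exists A. split; [exact PA|]. intros B AB PB t Bt.
    apply NNPP. intro nAt. apply (Amax B); [|exact PB]. split; [exact AB|].
    intro BA. apply nAt, BA, Bt.
Qed.

Section DisjointFamilies.
Context {V : VectorLattice}.
Implicit Types B C : V -> Prop.

Definition nontrivial B : Prop := exists f, B f /\ f <> vzero.

Definition disjoint_family (P : (V -> Prop) -> Prop) (A : (V -> Prop) -> Prop) : Prop :=
  (forall B, A B -> P B) /\
  (forall B1 B2, A B1 -> A B2 -> B1 <> B2 -> forall b1 b2, B1 b1 -> B2 b2 -> disjoint b1 b2).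

(** Zorn's lemma gives a maximal family; density makes it full. *)
Lemma exists_full_disjoint_family (P : (V -> Prop) -> Prop) :
  (forall B, P B -> nontrivial B) ->
  (forall C, is_band C -> nontrivial C -> exists2 B, P B & forall b, B b -> C b) ->
  exists A, disjoint_family P A /\
    forall k, (forall B b, A B -> B b -> disjoint k b) -> k = vzero.
Proof.
  intros Pnontriv Pdense.
  destruct (zorn_sets _ (disjoint_family P)) as [A [[AP Adisj] Amax]].
  { intros Ch ChP Chtot. split.
    - intros B [X ChX XB]. apply (proj1 (ChP X ChX)), XB.
    - intros B1 B2 [X1 Ch1 X1B] [X2 Ch2 X2B] ne.
      destruct (Chtot X1 X2 Ch1 Ch2) as [h|h].
      + apply (proj2 (ChP X2 Ch2)); auto.
      + apply (proj2 (ChP X1 Ch1)); auto. }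
  exists A. split; [split; assumption|]. intros k Hk.
  apply NNPP. intro Hk0.
  set (C := disj_compl (fun b => exists2 B, A B & B b)).
  destruct (Pdense C (disj_compl_band _)) as [B' PB' B'C].
  { exists k. split; [intros b [B AB Bb]; apply (Hk B); assumption | exact Hk0]. }
  assert (AB' : A B').
  { apply (Amax (fun B => A B \/ B = B')); [intros B AB; left; exact AB| |right; reflexivity].
    split.
    - intros B [AB | ->]; [apply AP, AB | exact PB'].
    - intros B1 B2 [A1 | ->] [A2 | ->] ne b1 b2 H1 H2.
      + apply (Adisj B1 B2); assumption.
      + apply disj_sym, (B'C b2 H2). exists B1; assumption.
      + apply (B'C b1 H1). exists B2; assumption.
      + exfalso. apply ne. reflexivity. }
  destruct (Pnontriv B' PB') as [f [Hf Hf0]].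
  apply Hf0, disj_self, (B'C f Hf). exists B'; assumption.
Qed.

End DisjointFamilies.

Section PartitionOfUnity.
Context {F : VectorLattice} (HF : dedekind_complete F).

Lemma partition_of_unity_bproj (A : (F -> Prop) -> Prop) :
  disjoint_family is_band A ->
  (forall k, (forall B b, A B -> B b -> disjoint k b) -> k = vzero) ->
  partition_of_unity (fun d : {B | A B} => bproj (proj1_sig d)).
Proof.
  intros [Aband Adisj] Afull. split; [|split].
  - intros [B AB]. exists B. split; [apply Aband, AB | apply (bproj_spec HF), Aband, AB].
  - intros [B1 A1] [B2 A2] ne f. simpl.
    assert (ne' : B1 <> B2) by (intro; subst; apply ne; f_equal; apply proof_irrelevance).
    apply (bp_compl (Aband B1 A1) (bproj_spec HF B1 (Aband B1 A1))).
    intros b Hb. apply (Adisj B2 B1); [assumption | assumption | auto | |exact Hb].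
    apply (bproj_spec HF B2 (Aband B2 A2)).
  - intros pi [Bpi [HBpi Hpi]] Hle f. symmetry. apply subr0_eq, Afull. intros B b AB Bb.
    apply (proj2 (Hpi f)).
    rewrite <- (bp_id (Aband B AB) (bproj_spec HF B (Aband B AB)) b Bb).
    pose proof (Hle (exist _ B AB) b) as Hfix. simpl in Hfix.
    rewrite <- Hfix. apply Hpi.
Qed.

Lemma partition_le0 {D : Type} (rho : D -> F -> F) z :
  partition_of_unity rho -> (forall a, vle (rho a z) vzero) -> vle z vzero.
Proof.
  intros [Hbp [_ Hsup]] Hz. set (k := vpos z).
  set (Ck := disj_compl (fun q => q = k)).
  assert (HCk : is_band Ck) by apply disj_compl_band.
  pose proof (bproj_spec HF Ck HCk) as Hpi.
  assert (Hfix : bproj Ck k = k).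
  { apply Hsup; [exists Ck; split; assumption|]. intros a f.
    destruct (Hbp a) as [Ba [HBa Hra]].
    apply (bp_id HCk Hpi). intros q ->.
    assert (Hk : vle k (vabs (vsub z (rho a z)))).
    { apply vle_trans with (vpos (vsub z (rho a z))); [|apply vpos_le_abs].
      unfold k. rewrite <- (subrK z (rho a z)) at 1.
      apply vle_trans with (vadd (vpos (vsub z (rho a z))) (vpos (rho a z))); [apply vposD_le|].
      rewrite (vpos_le0 _ (Hz a)), addr0. apply vle_refl. }
    apply disj_sym, (disj_le k (vsub z (rho a z))).
    - rewrite (abs_id k) by apply vpos_ge0. exact Hk.
    - apply (proj2 (Hra z)), Hra. }
  assert (Hk0 : k = vzero).
  { apply disj_self. rewrite <- Hfix at 1. apply (proj1 (Hpi k)). reflexivity. }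
  apply vle_trans with k; [apply le_vpos | rewrite Hk0; apply vle_refl].
Qed.

Lemma partition_le {D : Type} (rho : D -> F -> F) f g :
  partition_of_unity rho -> (forall a, vle (rho a f) g) -> vle f g.
Proof.
  intros Hpart Hfg. apply subr_le0, (partition_le0 rho); [exact Hpart|]. intro a.
  destruct (proj1 Hpart a) as [B [HB Hrho]].
  rewrite (bpB HB Hrho). apply subr_le0.
  rewrite <- (bp_id HB Hrho (rho a f)) by apply Hrho.
  apply (bp_mono HB Hrho), Hfg.
Qed.

End PartitionOfUnity.

Lemma in_U_plus_ge0 {E F : VectorLattice} (Q : E -> F) : in_U_plus Q -> forall z, vle vzero (Q z).
Proof. intros [_ H] z. specialize (H z). unfold U_zero in H. rewrite subr0 in H. exact H. Qed.

Lemma orth_additive0 {E F : VectorLattice} (Q : E -> F) : orth_additive Q -> Q vzero = vzero.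
Proof.
  intro H. apply (addIr _ _ (Q vzero)). rewrite vadd0, <- H, vadd0 by apply disj0. reflexivity.
Qed.

Lemma U_zero_in_U {E F : VectorLattice} : in_U (@U_zero E F).
Proof.
  split.
  - intros x y _. symmetry. apply vadd0.
  - intros a b. exists vzero, vzero. intros x _ _. split; apply vle_refl.
Qed.

(** * The infimum of [S] and [T] over fragments *)

Section FragmentInfimum.
Context {E F : VectorLattice} (HF : dedekind_complete F).
Variables S T : E -> F.
Hypotheses (HS : in_U_plus S) (HT : in_U_plus T).

(** [frag_inf] is [S /\ T] in U(E,F); only its being a lower bound of [S] and [T] there is used. *)
Definition frag_cost (z y : E) : F := vadd (S (vsub z y)) (T y).

Definition frag_costs (z : E) (f : F) : Prop := exists2 y, fragment y z & f = frag_cost z y.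

Definition frag_inf (z : E) : F := epsilon (inhabits vzero) (is_inf (frag_costs z)).

Lemma frag_cost_ge0 z y : vle vzero (frag_cost z y).
Proof. apply addr_ge0; apply in_U_plus_ge0; assumption. Qed.

Lemma frag_inf_spec z : is_inf (frag_costs z) (frag_inf z).
Proof.
  unfold frag_inf. apply epsilon_spec, (inf_exists HF).
  - exists (frag_cost z vzero), vzero; [apply frag0 | reflexivity].
  - exists vzero. intros f [y _ ->]. apply frag_cost_ge0.
Qed.

Lemma frag_inf_ge0 z : vle vzero (frag_inf z).
Proof. apply (proj2 (frag_inf_spec z)). intros f [y _ ->]. apply frag_cost_ge0. Qed.

Lemma frag_inf_le z y : fragment y z -> vle (frag_inf z) (frag_cost z y).
Proof. intro Hy. apply (proj1 (frag_inf_spec z)). exists y; [exact Hy | reflexivity]. Qed.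

Lemma frag_inf_leS z : vle (frag_inf z) (S z).
Proof.
  pose proof (frag_inf_le z vzero (frag0 z)) as H. unfold frag_cost in H.
  rewrite subr0, (orth_additive0 T (proj1 (proj1 HT))), addr0 in H. exact H.
Qed.

Lemma frag_inf_leT z : vle (frag_inf z) (T z).
Proof.
  pose proof (frag_inf_le z z (frag_refl z)) as H. unfold frag_cost in H.
  rewrite subrr, (orth_additive0 S (proj1 (proj1 HS))), vadd0 in H. exact H.
Qed.

Lemma frag_costD z1 z2 y1 y2 : disjoint z1 z2 -> fragment y1 z1 -> fragment y2 z2 ->
  frag_cost (vadd z1 z2) (vadd y1 y2) = vadd (frag_cost z1 y1) (frag_cost z2 y2).
Proof.
  intros H F1 F2. destruct (fragD _ _ _ _ H F1 F2) as (_ & D12 & Dc).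
  unfold frag_cost. rewrite subDD, (proj1 (proj1 HS)), (proj1 (proj1 HT)) by assumption.
  apply addrACA.
Qed.

Lemma frag_infD z1 z2 : disjoint z1 z2 ->
  frag_inf (vadd z1 z2) = vadd (frag_inf z1) (frag_inf z2).
Proof.
  intro H. apply vle_antisym.
  - set (l := frag_inf (vadd z1 z2)).
    assert (H1 : forall y2, fragment y2 z2 -> vle (vsub l (frag_cost z2 y2)) (frag_inf z1)).
    { intros y2 F2. apply (proj2 (frag_inf_spec z1)). intros f [y1 F1 ->].
      apply ler_subl_addr. rewrite <- frag_costD by assumption.
      apply frag_inf_le, (fragD _ _ _ _ H F1 F2). }
    assert (H2 : vle (vsub l (frag_inf z1)) (frag_inf z2)).
    { apply (proj2 (frag_inf_spec z2)). intros f [y2 F2 ->].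
      apply ler_subl_addr. rewrite vaddC. apply ler_subl_addr, H1, F2. }
    apply ler_subl_addr in H2. rewrite vaddC. exact H2.
  - apply (proj2 (frag_inf_spec _)). intros f [y Fy ->].
    destruct (frag_split _ _ _ H Fy) as (y1 & y2 & F1 & F2 & ->).
    rewrite frag_costD by assumption. apply lerD; apply frag_inf_le; assumption.
Qed.

Lemma frag_inf_in_U : in_U frag_inf.
Proof.
  split; [intros z1 z2; apply frag_infD|].
  intros a b. destruct (proj2 (proj1 HS) a b) as [c [d Hcd]].
  exists vzero, d. intros z Haz Hzb. split; [apply frag_inf_ge0|].
  apply vle_trans with (S z); [apply frag_inf_leS | apply (Hcd z Haz Hzb)].
Qed.

Lemma frag_cost_lb_le0 x h : U_inf_is S T U_zero ->
  (forall y, fragment y x -> vle h (frag_cost x y)) -> vle h vzero.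
Proof.
  intros (_ & _ & _ & Hgreatest) Hh.
  assert (H0 : U_le frag_inf U_zero).
  { apply Hgreatest; [apply frag_inf_in_U | |]; intro z; apply subr_ge0;
      [apply frag_inf_leS | apply frag_inf_leT]. }
  apply vle_trans with (frag_inf x).
  - apply (proj2 (frag_inf_spec x)). intros f [y Fy ->]. apply Hh, Fy.
  - apply subr_ge0, H0.
Qed.

End FragmentInfimum.

Section BandOff.
Context {F : VectorLattice} (HF : dedekind_complete F).
Implicit Types C : F -> Prop.

Definition band_off C (w : F) : F -> Prop := fun k => C k /\ disj_compl (fun q => q = w) k.

Lemma band_off_band C w : is_band C -> is_band (band_off C w).
Proof. intro HC. apply band_inter; [exact HC | apply disj_compl_band]. Qed.

Lemma bproj_band_off C w : is_band C -> bproj (band_off C w) w = vzero.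
Proof.
  intro HC. apply (bp_compl (band_off_band C w HC) (bproj_spec HF _ (band_off_band C w HC))).
  intros b [_ Hb]. apply disj_sym, Hb. reflexivity.
Qed.

Lemma band_off_or_meet C f w : is_band C -> C f -> vle vzero f -> f <> vzero -> vle vzero w ->
  nontrivial (band_off C w) \/ (C (vmeet f w) /\ vle vzero (vmeet f w) /\ vmeet f w <> vzero).
Proof.
  intros HC Cf Hf Hf0 Hw. destruct (classic (vmeet f w = vzero)) as [H0 | H0].
  - left. exists f. split; [|exact Hf0]. split; [exact Cf|].
    intros q ->. apply disj_ge0; assumption.
  - right. assert (Hm : vle vzero (vmeet f w)) by (apply meet_ge0; assumption).
    split; [|split; assumption].
    apply (band_le C f); [exact HC | exact Cf | exact Hm |]. rewrite abs_id by exact Hf. apply vmeet_l.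
Qed.

End BandOff.

Section Forward.
Context {E F : VectorLattice} (HF : dedekind_complete F).
Variables S T : E -> F.
Hypotheses (HS : in_U_plus S) (HT : in_U_plus T) (Hinf : U_inf_is S T U_zero).
Variables (x : E) (eps : R).
Hypothesis Heps : 0 < eps.

Definition good_band (B : F -> Prop) : Prop :=
  is_band B /\ nontrivial B /\
  exists2 y, fragment y x &
    vle (bproj B (T y)) (vscal eps (T x)) /\ vle (bproj B (S (vsub x y))) (vscal eps (S x)).

Let S0 : S vzero = vzero := orth_additive0 S (proj1 (proj1 HS)).
Let T0 : T vzero = vzero := orth_additive0 T (proj1 (proj1 HT)).

Lemma eps_scale_ge0 (f : F) : vle vzero f -> vle vzero (vscal eps f).
Proof. intro H. apply scale_ge0; [lra | exact H]. Qed.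

Lemma good_band_off_T C : is_band C -> nontrivial (band_off C (T x)) -> good_band (band_off C (T x)).
Proof.
  intros HC Hnt. split; [apply band_off_band, HC | split; [exact Hnt|]].
  exists x; [apply frag_refl|]. split.
  - rewrite (bproj_band_off HF) by exact HC. apply eps_scale_ge0, in_U_plus_ge0, HT.
  - rewrite subrr, S0, (bproj0 HF) by (apply band_off_band, HC).
    apply eps_scale_ge0, in_U_plus_ge0, HS.
Qed.

Lemma good_band_off_S C : is_band C -> nontrivial (band_off C (S x)) -> good_band (band_off C (S x)).
Proof.
  intros HC Hnt. split; [apply band_off_band, HC | split; [exact Hnt|]].
  exists vzero; [apply frag0|]. split.
  - rewrite T0, (bproj0 HF) by (apply band_off_band, HC).
    apply eps_scale_ge0, in_U_plus_ge0, HT.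
  - rewrite subr0, (bproj_band_off HF) by exact HC. apply eps_scale_ge0, in_U_plus_ge0, HS.
Qed.

Definition excess (y : E) : F := vpos (vsub (frag_cost S T x y) (vscal eps (vmeet (T x) (S x)))).

Lemma good_band_off_excess C y : is_band C -> fragment y x ->
  nontrivial (band_off C (excess y)) -> good_band (band_off C (excess y)).
Proof.
  intros HC Fy Hnt. set (B := band_off C (excess y)).
  assert (HB : is_band B) by apply band_off_band, HC.
  pose proof (bproj_spec HF B HB) as Hp.
  split; [exact HB | split; [exact Hnt|]]. exists y; [exact Fy|].
  assert (Hm : vle vzero (vmeet (T x) (S x))) by (apply meet_ge0; apply in_U_plus_ge0; assumption).
  assert (Hcost : vle (bproj B (frag_cost S T x y)) (vscal eps (vmeet (T x) (S x)))).
  { pose proof (bp_le0_of_vpos HB Hp _ (bproj_band_off HF C _ HC)) as H.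
    rewrite (bpB HB Hp), (bpZ HB Hp) in H. apply (proj1 (subr_le0 _ _)) in H.
    apply vle_trans with (vscal eps (bproj B (vmeet (T x) (S x)))); [exact H|].
    apply vle_scal; [lra | apply (bp_le Hp), Hm]. }
  unfold frag_cost in Hcost. rewrite (bpD HB Hp) in Hcost.
  pose proof (bp_ge0 HB Hp _ (in_U_plus_ge0 S HS (vsub x y))) as HSy.
  pose proof (bp_ge0 HB Hp _ (in_U_plus_ge0 T HT y)) as HTy.
  split; (apply vle_trans with (vscal eps (vmeet (T x) (S x)));
    [apply vle_trans with (vadd (bproj B (S (vsub x y))) (bproj B (T y))); [|exact Hcost]|]).
  - apply ler_addl, HSy.
  - apply vle_scal; [lra | apply vmeet_l].
  - apply ler_addr, HTy.
  - apply vle_scal; [lra | apply vmeet_r].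
Qed.

Lemma cost_lb_of_trivial_excess C h y : is_band C -> C h -> vle vzero h ->
  vle h (vmeet (T x) (S x)) -> ~ nontrivial (band_off C (excess y)) ->
  vle (vscal eps h) (frag_cost S T x y).
Proof.
  intros HC Ch Hh Hhm Htriv. set (k := vpos (vsub (vscal eps h) (frag_cost S T x y))).
  assert (Hk : vle k (vneg (vsub (frag_cost S T x y) (vscal eps (vmeet (T x) (S x)))))).
  { unfold k, vneg. apply vpos_mono. rewrite oppB. unfold vsub. apply vle_add.
    apply vle_scal; [lra | exact Hhm]. }
  assert (Ck : band_off C (excess y) k).
  { split.
    - apply (band_le C (vscal eps h)); [exact HC | apply band_scale; assumption | apply vpos_ge0 |].
      rewrite abs_id by (apply eps_scale_ge0, Hh). apply vpos_le; [|apply eps_scale_ge0, Hh].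
      apply ler_subl_addr, ler_addr. apply frag_cost_ge0; assumption.
    - intros q ->. apply (disj_le _ (vneg (vsub (frag_cost S T x y) (vscal eps (vmeet (T x) (S x)))))).
      + rewrite !abs_id by (apply vpos_ge0 || apply vneg_ge0). exact Hk.
      + apply disj_sym, disj_vpos_vneg. }
  assert (Hk0 : k = vzero).
  { apply NNPP. intro Hk0. apply Htriv. exists k. split; assumption. }
  apply subr_le0. apply vle_trans with k; [apply le_vpos | rewrite Hk0; apply vle_refl].
Qed.

Lemma good_band_dense C : is_band C -> nontrivial C -> exists2 B, good_band B & forall b, B b -> C b.
Proof.
  intros HC [f [Cf Hf0]].
  assert (Ca : C (vabs f)) by (apply band_abs; assumption).
  assert (Ha0 : vabs f <> vzero) by (intro H; apply Hf0, abs_eq0, H).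
  destruct (band_off_or_meet C (vabs f) (T x) HC Ca (abs_ge0 f) Ha0 (in_U_plus_ge0 T HT x))
    as [Hnt | (Cg & Hg & Hg0)].
  { exists (band_off C (T x)); [apply good_band_off_T; assumption | intros b []; assumption]. }
  destruct (band_off_or_meet C _ (S x) HC Cg Hg Hg0 (in_U_plus_ge0 S HS x))
    as [Hnt | (Ch & Hh & Hh0)].
  { exists (band_off C (S x)); [apply good_band_off_S; assumption | intros b []; assumption]. }
  destruct (classic (exists2 y, fragment y x & nontrivial (band_off C (excess y))))
    as [[y Fy Hnt] | Hnone].
  { exists (band_off C (excess y)); [apply good_band_off_excess; assumption | intros b []; assumption]. }
  exfalso. apply Hh0, vle_antisym; [|exact Hh].
  apply (ler_pscale2l eps); [exact Heps|]. rewrite scaler0.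
  apply (frag_cost_lb_le0 HF S T HS HT x); [exact Hinf|]. intros y Fy.
  apply (cost_lb_of_trivial_excess C); try assumption.
  - apply leI; [apply vmeet_r | apply vle_refl].
  - intro Hnt. apply Hnone. exists y; assumption.
Qed.

Definition fragment_partition : Prop :=
  exists (D : Type) (rho : D -> F -> F) (xs : D -> E),
    partition_of_unity rho /\
    (forall a, fragment (xs a) x) /\
    (forall a, vle (rho a (T (xs a))) (vscal eps (T x)) /\
               vle (rho a (S (vsub x (xs a)))) (vscal eps (S x))).

Lemma partition_of_meet0 : fragment_partition.
Proof.
  destruct (exists_full_disjoint_family good_band) as [A [[Agood Adisj] Afull]].
  - intros B (_ & Hnt & _). exact Hnt.
  - exact good_band_dense.
  - assert (Hxs : forall d : {B | A B}, exists y, fragment y x /\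
        vle (bproj (proj1_sig d) (T y)) (vscal eps (T x)) /\
        vle (bproj (proj1_sig d) (S (vsub x y))) (vscal eps (S x))).
    { intros [B AB]. destruct (Agood B AB) as (_ & _ & [y Fy Hy]). exists y. split; assumption. }
    destruct (choice _ Hxs) as [xs Hxs'].
    exists {B | A B}, (fun d => bproj (proj1_sig d)), xs. split; [|split; intro d; apply Hxs'].
    apply (partition_of_unity_bproj HF); [|exact Afull].
    split; [intros B AB; apply Agood, AB | exact Adisj].
Qed.

End Forward.

Lemma meet0_of_partition {E F : VectorLattice} (HF : dedekind_complete F) (S T : E -> F) :
  in_U_plus S -> in_U_plus T ->
  (forall x eps, 0 < eps -> fragment_partition S T x eps) -> U_inf_is S T U_zero.
Proof.
  intros HS HT Hpart. split; [apply U_zero_in_U | split; [apply HS | split; [apply HT|]]].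
  intros R [HRadd _] HRS HRT z. unfold U_zero. apply subr_ge0.
  apply (archimedean HF (vadd (T z) (S z))); [apply addr_ge0; apply in_U_plus_ge0; assumption|].
  intros eps Heps. destruct (Hpart z eps Heps) as (D & rho & xs & Hrho & Hfr & Hle).
  apply (partition_le HF rho); [exact Hrho|]. intro a.
  destruct (proj1 Hrho a) as [B [HB Hp]].
  assert (HRz : vle (R z) (frag_cost S T z (xs a))).
  { rewrite <- (subrKC z (xs a)) at 1. rewrite HRadd by apply Hfr.
    unfold frag_cost. rewrite vaddC. apply lerD; apply subr_ge0; [apply HRS | apply HRT]. }
  apply vle_trans with (rho a (frag_cost S T z (xs a))); [apply (bp_mono HB Hp), HRz|].
  unfold frag_cost. rewrite (bpD HB Hp), vscalDr, vaddC.
  apply lerD; [apply (proj1 (Hle a)) | apply (proj2 (Hle a))].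
Qed.

Theorem theorem3p3 (E F : VectorLattice) (HF : dedekind_complete F)
  (S T : E -> F) (HS : in_U_plus S) (HT : in_U_plus T) :
  U_inf_is S T U_zero <->
  (forall (x : E) (eps : R), 0 < eps ->
     exists (D : Type) (rho : D -> F -> F) (xs : D -> E),
       partition_of_unity rho /\
       (forall a, fragment (xs a) x) /\
       (forall a, vle (rho a (T (xs a))) (vscal eps (T x)) /\
                  vle (rho a (S (vsub x (xs a)))) (vscal eps (S x)))).
Proof.
  split.
  - intros Hinf x eps Heps. exact (partition_of_meet0 HF S T HS HT Hinf x eps Heps).
  - apply meet0_of_partition; assumption.
Qed.
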